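(* Let $\alpha\in[0,1)$, let $q_\alpha\in\mathcal{P}\big((1+\alpha)/2\big)$, and let $g:[0,1)\to\mathbb{R}$ be continuously differentiable with $g(0)=0$ and $g'(0)\neq0$. Then for every $\epsilon>0$ there exists $\delta>0$ such that for every $r\in(1-\delta,1)$, $$r\int_0^r (g'(x))^2\,dx \;\ge\; r\int_0^r q_\alpha(x)\,g^2(x)\,dx+\left(\frac{1+\alpha}{2}-\epsilon\right)g^2(r).$$
   Context: For $\gamma\ge 0$, $\mathcal{P}(\gamma)$ is the class of continuous functions $q:[0,1)\to\mathbb{R}$ such that (a) $q(r)\ge0$ for all $r\in[0,1)$, and (b) the solution $y$ of $y''+qy=0$, $y(0)=0$, $y'(0)=1$, is positive on $(0,1)$ and satisfies $\lim_{x\to1^-} \frac{y'(x)}{y(x)}\ge\gamma$. *)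

From Stdlib Require Import Reals.
From Coquelicot Require Import Coquelicot.
Open Scope R_scope.

Definition I01 (x : R) : Prop := 0 <= x < 1.

Definition is_derive_I01 (f : R -> R) (x l : R) : Prop :=
  filterdiff f (within I01 (locally x)) (fun h => scal h l).

Definition continuous_I01 (f : R -> R) : Prop :=
  forall x, I01 x -> filterlim f (within I01 (locally x)) (locally (f x)).

Definition ivp_solution (q y dy : R -> R) : Prop :=
  y 0 = 0 /\ dy 0 = 1 /\
  (forall x, I01 x -> is_derive_I01 y x (dy x)) /\
  (forall x, I01 x -> is_derive_I01 dy x (- (q x * y x))).

Definition classP (gamma : R) (q : R -> R) : Prop :=
  continuous_I01 q /\
  (forall r, I01 r -> 0 <= q r) /\
  exists y dy : R -> R,
    ivp_solution q y dy /\
    (forall x, 0 < x < 1 -> 0 < y x) /\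
    exists l : Rbar,
      filterlim (fun x => dy x / y x) (at_left 1) (Rbar_locally l) /\
      Rbar_le (Finite gamma) l.

(* Picone's identity.  The ratio w = y'/y solves the Riccati equation
   w' = -q - w^2 on (0,1), so
     K(a) = \int_0^a g'^2 - \int_0^a q g^2 - w(a) g(a)^2
   has derivative (g' - w g)^2 >= 0.  Since y(a) ~ a and g(a) = O(a) at 0,
   K(a) -> 0 as a -> 0+, hence K(r) >= 0, i.e.
     \int_0^r g'^2 - \int_0^r q g^2 >= w(r) g(r)^2.
   Near 1 the ratio w(r) exceeds (1+alpha)/2 - eps/2, and multiplying by
   r > 1 - eps/2 costs at most another eps/2. *)

From Stdlib Require Import Reals Lra.
From Coquelicot Require Import Coquelicot.
Open Scope R_scope.

Section LimitArithmetic.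

Context {T : Type} {F : (T -> Prop) -> Prop} {FF : Filter F}.

Lemma filterlim_Rmult (f g : T -> R) (a b : R) :
  filterlim f F (locally a) -> filterlim g F (locally b) ->
  filterlim (fun x => f x * g x) F (locally (a * b)).
Proof. intros Hf Hg. exact (filterlim_comp_2 f g Rmult Hf Hg (filterlim_mult a b)). Qed.

Lemma filterlim_Rminus (f g : T -> R) (a b : R) :
  filterlim f F (locally a) -> filterlim g F (locally b) ->
  filterlim (fun x => f x - g x) F (locally (a - b)).
Proof.
  intros Hf Hg.
  assert (Hg' : filterlim (fun x => - g x) F (locally (- b))).
  { eapply filterlim_comp; [exact Hg | exact (filterlim_opp b)]. }
  exact (filterlim_comp_2 f (fun x => - g x) Rplus Hf Hg' (filterlim_plus a (- b))).
Qed.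

Lemma filterlim_Rinv (f : T -> R) (a : R) :
  a <> 0 -> filterlim f F (locally a) -> filterlim (fun x => / f x) F (locally (/ a)).
Proof.
  intros Ha Hf. eapply filterlim_comp; [exact Hf |].
  apply (filterlim_Rbar_inv (Finite a)). now intros [= ->].
Qed.

End LimitArithmetic.

Lemma I01_locally (x : R) : 0 < x < 1 -> locally x I01.
Proof.
  intros Hx. assert (Hd : 0 < Rmin x (1 - x)) by (apply Rmin_pos; lra).
  exists (mkposreal _ Hd). intros y Hy.
  change (Rabs (y - x) < Rmin x (1 - x)) in Hy. apply Rabs_def2 in Hy.
  generalize (Rmin_l x (1 - x)) (Rmin_r x (1 - x)). unfold I01. lra.
Qed.

Lemma within_I01_interior (x : R) (P : R -> Prop) :
  0 < x < 1 -> within I01 (locally x) P -> locally x P.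
Proof.
  intros Hx HP. generalize (filter_and _ _ (I01_locally x Hx) HP).
  apply filter_imp. intros y [Hy HPy]. exact (HPy Hy).
Qed.

Lemma at_right_0_le_within_I01 : filter_le (at_right 0) (within I01 (locally 0)).
Proof.
  intros P [d HP]. assert (Hd : 0 < Rmin d 1) by (apply Rmin_pos; [apply cond_pos | lra]).
  exists (mkposreal _ Hd). intros y Hy Hy0.
  change (Rabs (y - 0) < Rmin d 1) in Hy. apply Rabs_def2 in Hy.
  generalize (Rmin_l d 1) (Rmin_r d 1). intros.
  apply HP; [apply Rabs_def1; rewrite Rminus_0_r in *; lra | unfold I01; lra].
Qed.

Lemma is_derive_I01_approx (f : R -> R) (x l : R) (eps : posreal) :
  is_derive_I01 f x l ->
  within I01 (locally x) (fun y => Rabs (f y - f x - (y - x) * l) <= eps * Rabs (y - x)).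
Proof.
  intros [_ Hdom]. apply (Hdom x). intros P HP. now apply filter_le_within.
Qed.

Lemma is_derive_I01_interior (f : R -> R) (x l : R) :
  0 < x < 1 -> is_derive_I01 f x l -> is_derive f x l.
Proof.
  intros Hx [Hlin Hdom]. split; [exact Hlin |].
  intros x' Hx'. apply (@is_filter_lim_locally_unique _ R_NormedModule) in Hx'. subst x'.
  intros eps. apply within_I01_interior; [exact Hx |].
  apply Hdom. intros P HP. now apply filter_le_within.
Qed.

Lemma is_derive_I01_continuous (f : R -> R) (x l : R) :
  is_derive_I01 f x l -> filterlim f (within I01 (locally x)) (locally (f x)).
Proof.
  intros Hf. apply filterlim_locally. intros eps.
  assert (Hk : 0 < Rabs l + 1) by (generalize (Rabs_pos l); lra).
  assert (Hd : 0 < eps / (Rabs l + 1)) by (apply Rdiv_lt_0_compat; [apply cond_pos | lra]).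
  assert (Hnear : within I01 (locally x) (fun y => Rabs (y - x) < eps / (Rabs l + 1))).
  { apply filter_le_within. exists (mkposreal _ Hd). now intros y Hy. }
  generalize (filter_and _ _ Hnear (is_derive_I01_approx f x l (mkposreal 1 Rlt_0_1) Hf)).
  apply filter_imp. intros y [Hy Happrox]. simpl in Happrox.
  change (Rabs (f y - f x) < eps).
  replace (f y - f x) with ((f y - f x - (y - x) * l) + (y - x) * l) by ring.
  eapply Rle_lt_trans; [apply Rabs_triang |]. rewrite Rabs_mult.
  apply Rlt_div_r in Hy; [nra | lra].
Qed.

Lemma is_derive_I01_slope_at_right_0 (f : R -> R) (l : R) :
  is_derive_I01 f 0 l -> filterlim (fun a => (f a - f 0) / a) (at_right 0) (locally l).
Proof.
  intros Hf. apply filterlim_locally. intros eps.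
  assert (Hpos : at_right 0 (fun a => 0 < a)) by (exists (mkposreal 1 Rlt_0_1); now intros).
  generalize (filter_and _ _ Hpos (at_right_0_le_within_I01 _
    (is_derive_I01_approx f 0 l (pos_div_2 eps) Hf))).
  apply filter_imp. intros a [Ha Happrox]. simpl in Happrox.
  change (Rabs ((f a - f 0) / a - l) < eps).
  rewrite !Rminus_0_r, (Rabs_right a) in Happrox by lra.
  replace ((f a - f 0) / a - l) with ((f a - f 0 - a * l) / a) by (field; lra).
  rewrite Rabs_div, (Rabs_right a) by lra.
  apply Rle_lt_trans with (eps / 2); [| generalize (cond_pos eps); lra].
  apply Rle_div_l; lra.
Qed.

Lemma continuous_I01_mult (f g : R -> R) :
  continuous_I01 f -> continuous_I01 g -> continuous_I01 (fun x => f x * g x).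
Proof. intros Hf Hg x Hx. exact (filterlim_Rmult _ _ _ _ (Hf x Hx) (Hg x Hx)). Qed.

Lemma continuous_I01_pow2 (f : R -> R) :
  continuous_I01 f -> continuous_I01 (fun x => f x ^ 2).
Proof.
  intros Hf x Hx. replace (f x ^ 2) with (f x * f x) by ring.
  apply (filterlim_ext (fun x => f x * f x)); [intros; ring |].
  exact (continuous_I01_mult f f Hf Hf x Hx).
Qed.

Lemma continuous_I01_of_derive (f df : R -> R) :
  (forall x, I01 x -> is_derive_I01 f x (df x)) -> continuous_I01 f.
Proof. intros Hf x Hx. exact (is_derive_I01_continuous f x (df x) (Hf x Hx)). Qed.

(* Coquelicot's integration lemmas need two-sided continuity, hence the
   extension by the constant f 0 to the left of 0. *)
Lemma continuous_I01_extend (f : R -> R) (z : R) :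
  continuous_I01 f -> z < 1 -> continuous (fun x => f (Rmax 0 x)) z.
Proof.
  intros Hf Hz P HP. destruct (Rle_lt_dec 0 z) as [Hz0 | Hz0].
  - rewrite Rmax_right in HP by lra.
    destruct (Hf z (conj Hz0 Hz) P HP) as [[d Hd] HPd].
    assert (He : 0 < Rmin d (1 - z)) by (apply Rmin_pos; lra).
    exists (mkposreal _ He). intros x Hx.
    change (Rabs (x - z) < Rmin d (1 - z)) in Hx. apply Rabs_def2 in Hx.
    generalize (Rmin_l d (1 - z)) (Rmin_r d (1 - z)). intros.
    apply HPd; unfold Rmax; destruct (Rle_dec 0 x).
    + change (Rabs (x - z) < d). apply Rabs_def1; lra.
    + change (Rabs (0 - z) < d). apply Rabs_def1; lra.
    + unfold I01; lra.
    + unfold I01; lra.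
  - rewrite Rmax_left in HP by lra. apply locally_singleton in HP.
    assert (He : 0 < - z) by lra.
    exists (mkposreal _ He). intros x Hx.
    change (Rabs (x - z) < - z) in Hx. apply Rabs_def2 in Hx.
    now rewrite Rmax_left by lra.
Qed.

Lemma ex_RInt_I01 (f : R -> R) (b : R) :
  continuous_I01 f -> 0 <= b < 1 -> ex_RInt f 0 b.
Proof.
  intros Hf Hb.
  apply (ex_RInt_ext (fun x => f (Rmax 0 x))).
  - intros x Hx. rewrite Rmin_left, Rmax_right in Hx by lra. now rewrite Rmax_right by lra.
  - apply (ex_RInt_continuous (V := R_CompleteNormedModule)).
    intros z Hz. rewrite Rmin_left, Rmax_right in Hz by lra.
    apply continuous_I01_extend; [exact Hf | lra].
Qed.

Lemma RInt_I01_is_derive (f : R -> R) (a : R) :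
  continuous_I01 f -> 0 < a < 1 -> is_derive (RInt f 0) a (f a).
Proof.
  intros Hf Ha. apply (is_derive_RInt f (RInt f 0) 0 a).
  - apply (filter_imp I01); [| exact (I01_locally a Ha)].
    intros b Hb. apply (RInt_correct (V := R_CompleteNormedModule)).
    apply ex_RInt_I01; [exact Hf | exact Hb].
  - intros P HP. apply within_I01_interior; [exact Ha |].
    exact (Hf a (conj (Rlt_le _ _ (proj1 Ha)) (proj2 Ha)) P HP).
Qed.

Lemma RInt_I01_at_right_0 (f : R -> R) :
  continuous_I01 f -> filterlim (RInt f 0) (at_right 0) (locally 0).
Proof.
  intros Hf.
  set (fe := fun x => f (Rmax 0 x)).
  assert (Hint : forall b, b < 1 -> ex_RInt fe 0 b).
  { intros b Hb. apply (ex_RInt_continuous (V := R_CompleteNormedModule)). intros z Hz.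
    apply continuous_I01_extend; [exact Hf |].
    generalize (Rmax_r 0 b) (Rmax_l 0 b). unfold Rmax in Hz |- *. destruct (Rle_dec 0 b); lra. }
  assert (Hcont : continuous (RInt fe 0) 0).
  { apply (continuous_RInt_0 fe 0).
    exists (mkposreal 1 Rlt_0_1). intros b Hb.
    change (Rabs (b - 0) < 1) in Hb. apply Rabs_def2 in Hb.
    apply (RInt_correct (V := R_CompleteNormedModule)), Hint. lra. }
  assert (H0 : RInt fe 0 0 = 0) by exact (RInt_point (V := R_CompleteNormedModule) 0 fe).
  unfold continuous in Hcont. rewrite H0 in Hcont.
  apply (filterlim_ext_loc (RInt fe 0)).
  - exists (mkposreal 1 Rlt_0_1). intros b _ Hb.
    apply RInt_ext. intros x Hx. rewrite Rmin_left, Rmax_right in Hx by lra.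
    unfold fe. now rewrite Rmax_right by lra.
  - intros P HP. apply filter_le_within. exact (Hcont P HP).
Qed.

Lemma nonneg_of_derive_nonneg_lim_0 (K dK : R -> R) (r : R) :
  0 < r ->
  (forall a, 0 < a <= r -> is_derive K a (dK a)) ->
  (forall a, 0 < a <= r -> 0 <= dK a) ->
  filterlim K (at_right 0) (locally 0) ->
  0 <= K r.
Proof.
  intros Hr HK HdK Hlim.
  assert (Hmono : forall a, 0 < a < r -> K a <= K r).
  { intros a Ha.
    destruct (MVT_gen K a r dK) as [c [Hc Hmvt]];
      rewrite ?Rmin_left, ?Rmax_right in * by lra.
    - intros x Hx. apply HK. lra.
    - intros x Hx. apply continuity_pt_filterlim, (ex_derive_continuous (V := R_NormedModule)).
      exists (dK x). apply HK. lra.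
    - assert (0 <= dK c) by (apply HdK; lra). nra. }
  apply (filterlim_le (F := at_right 0) K (fun _ => K r) 0 (K r)).
  - exists (mkposreal r Hr). intros a Ha Ha0.
    change (Rabs (a - 0) < r) in Ha. apply Rabs_def2 in Ha. apply Hmono. lra.
  - exact Hlim.
  - apply filterlim_const.
Qed.

Section Picone.

Variables q y dy g dg : R -> R.
Hypothesis q_cont : continuous_I01 q.
Hypothesis g_der : forall x, I01 x -> is_derive_I01 g x (dg x).
Hypothesis dg_cont : continuous_I01 dg.
Hypothesis g0 : g 0 = 0.
Hypothesis y_ivp : ivp_solution q y dy.
Hypothesis y_pos : forall x, 0 < x < 1 -> 0 < y x.

Definition picone_defect (a : R) : R :=
  RInt (fun x => dg x ^ 2) 0 a - RInt (fun x => q x * g x ^ 2) 0 a - dy a / y a * g a ^ 2.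

Lemma dg_sq_cont : continuous_I01 (fun x => dg x ^ 2).
Proof. exact (continuous_I01_pow2 dg dg_cont). Qed.

Lemma q_g_sq_cont : continuous_I01 (fun x => q x * g x ^ 2).
Proof.
  exact (continuous_I01_mult q _ q_cont
    (continuous_I01_pow2 g (continuous_I01_of_derive g dg g_der))).
Qed.

Lemma riccati_term_derive (a : R) :
  0 < a < 1 ->
  is_derive (fun t => dy t / y t * g t ^ 2) a
    (- q a * g a ^ 2 + 2 * (dy a / y a) * g a * dg a - (dy a / y a) ^ 2 * g a ^ 2).
Proof.
  intros Ha. destruct y_ivp as (_ & _ & y_der & dy_der).
  assert (Ia : I01 a) by (unfold I01; lra).
  assert (Hya : y a <> 0) by (apply Rgt_not_eq, y_pos, Ha).
  assert (Hw : is_derive (fun t => dy t / y t) a ((- (q a * y a) * y a - dy a * dy a) / y a ^ 2)).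
  { apply is_derive_div; [| | exact Hya]; apply is_derive_I01_interior; auto. }
  assert (Hg2 : is_derive (fun t => g t ^ 2) a (INR 2 * dg a * g a ^ 1)).
  { apply is_derive_pow, is_derive_I01_interior; auto. }
  assert (Hprod := is_derive_mult _ _ _ _ _ Hw Hg2 (fun x y => Rmult_comm x y)).
  refine (eq_rect _ (is_derive _ a) Hprod _ _).
  simpl. unfold plus, mult; simpl. field. exact Hya.
Qed.

Lemma picone_defect_derive (a : R) :
  0 < a < 1 -> is_derive picone_defect a ((dg a - dy a / y a * g a) ^ 2).
Proof.
  intros Ha.
  assert (Hya : y a <> 0) by (apply Rgt_not_eq, y_pos, Ha).
  assert (HA := RInt_I01_is_derive _ a dg_sq_cont Ha).
  assert (HB := RInt_I01_is_derive _ a q_g_sq_cont Ha).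
  assert (HK := is_derive_minus _ _ _ _ _
    (is_derive_minus _ _ _ _ _ HA HB) (riccati_term_derive a Ha)).
  refine (eq_rect _ (is_derive _ a) HK _ _).
  simpl. unfold minus, plus, opp; simpl. field. exact Hya.
Qed.

Lemma riccati_term_at_right_0 :
  filterlim (fun a => dy a / y a * g a ^ 2) (at_right 0) (locally 0).
Proof.
  destruct y_ivp as (y0 & dy0 & y_der & dy_der).
  assert (I0 : I01 0) by (unfold I01; lra).
  assert (Hdy : filterlim dy (at_right 0) (locally 1)).
  { rewrite <- dy0. eapply filterlim_filter_le_1; [apply at_right_0_le_within_I01 |].
    exact (is_derive_I01_continuous dy 0 _ (dy_der 0 I0)). }
  assert (Hy : filterlim (fun a => (y a - y 0) / a) (at_right 0) (locally 1)).
  { rewrite <- dy0. exact (is_derive_I01_slope_at_right_0 y _ (y_der 0 I0)). }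
  assert (Hg : filterlim (fun a => (g a - g 0) / a) (at_right 0) (locally (dg 0))).
  { exact (is_derive_I01_slope_at_right_0 g _ (g_der 0 I0)). }
  assert (Hid : filterlim (fun a => a) (at_right 0) (locally 0)).
  { intros P HP. now apply filter_le_within. }
  (* w(a) g(a)^2 = y'(a) (g(a)/a)^2 / (y(a)/a) * a  ->  1 * g'(0)^2 / 1 * 0 *)
  assert (Hlim := filterlim_Rmult _ _ _ _
    (filterlim_Rmult _ _ _ _ (filterlim_Rmult _ _ _ _ Hdy (filterlim_Rmult _ _ _ _ Hg Hg))
      (filterlim_Rinv _ _ R1_neq_R0 Hy)) Hid).
  rewrite Rmult_0_r in Hlim.
  eapply filterlim_ext_loc; [| exact Hlim].
  exists (mkposreal 1 Rlt_0_1). intros a Ha Ha0.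
  change (Rabs (a - 0) < 1) in Ha. apply Rabs_def2 in Ha.
  assert (Hya : 0 < y a) by (apply y_pos; lra).
  rewrite y0, g0. field. lra.
Qed.

Lemma picone_defect_at_right_0 : filterlim picone_defect (at_right 0) (locally 0).
Proof.
  assert (Hlim := filterlim_Rminus _ _ _ _
    (filterlim_Rminus _ _ _ _
      (RInt_I01_at_right_0 _ dg_sq_cont) (RInt_I01_at_right_0 _ q_g_sq_cont))
    riccati_term_at_right_0).
  rewrite !Rminus_0_r in Hlim. exact Hlim.
Qed.

Lemma picone_inequality (r : R) :
  0 < r < 1 ->
  dy r / y r * g r ^ 2 <= RInt (fun x => dg x ^ 2) 0 r - RInt (fun x => q x * g x ^ 2) 0 r.
Proof.
  intros Hr.
  assert (HK : 0 <= picone_defect r).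
  { apply (nonneg_of_derive_nonneg_lim_0 _ (fun a => (dg a - dy a / y a * g a) ^ 2));
      [lra | | | exact picone_defect_at_right_0].
    - intros a Ha. apply picone_defect_derive. lra.
    - intros a _. apply pow2_ge_0. }
  unfold picone_defect in HK. lra.
Qed.

End Picone.

Theorem lemma3p2 (alpha : R) (q g dg : R -> R) :
  0 <= alpha < 1 ->
  classP ((1 + alpha) / 2) q ->
  (forall x, I01 x -> is_derive_I01 g x (dg x)) ->
  continuous_I01 dg ->
  g 0 = 0 ->
  dg 0 <> 0 ->
  forall eps : R, 0 < eps ->
  exists delta : R, 0 < delta /\
    forall r : R, 1 - delta < r < 1 ->
      r * RInt (fun x => (dg x) ^ 2) 0 r >=
      r * RInt (fun x => q x * (g x) ^ 2) 0 r
        + ((1 + alpha) / 2 - eps) * (g r) ^ 2.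
Proof.
  intros Halpha HP Hg Hdg Hg0 _ eps Heps.
  destruct HP as (Hq & _ & y & dy & Hivp & Hypos & l & Hlim & Hl).
  set (gam := (1 + alpha) / 2) in *.
  assert (Hratio : at_left 1 (fun r => gam - eps / 2 < dy r / y r)).
  { apply Hlim, (open_Rbar_gt' l (gam - eps / 2)).
    eapply Rbar_lt_le_trans; [| exact Hl]. simpl. lra. }
  destruct Hratio as [d Hd].
  exists (Rmin d (Rmin 1 (eps / 2))). split.
  { repeat apply Rmin_pos; [apply cond_pos | lra | lra]. }
  intros r Hr.
  generalize (Rmin_l d (Rmin 1 (eps / 2))) (Rmin_r d (Rmin 1 (eps / 2)))
    (Rmin_l 1 (eps / 2)) (Rmin_r 1 (eps / 2)). intros.
  assert (Hw : gam - eps / 2 < dy r / y r).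
  { apply Hd; [change (Rabs (r - 1) < d); apply Rabs_def1 |]; lra. }
  assert (Hpicone := picone_inequality q y dy g dg Hq Hg Hdg Hg0 Hivp Hypos r ltac:(lra)).
  assert (Hg2 : 0 <= g r ^ 2) by apply pow2_ge_0.
  assert (Hgam : 0 <= gam <= 1) by (unfold gam; lra).
  assert (Hrw : gam - eps <= r * (dy r / y r)) by nra.
  nra.
Qed.
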